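(* Let $\mathcal{G}$ (the Galilei group) be the group of transformations of $\mathbb{R}^4=\mathbb{R}^3\times\mathbb{R}$ of the form $x\mapsto \begin{pmatrix} S & w\\ 0^T & 1\end{pmatrix}x+b$ with $S\in SO(3)$, $w\in\mathbb{R}^3$, $b\in\mathbb{R}^4$. Then the nontrivial $\mathcal{G}$-invariant equivalence relations on $\mathbb{R}^4$ are exactly the relations $\sim_H$, where $H$ ranges over the proper additive subgroups of $\mathbb{R}$, whose equivalence classes are $[x]_H=x+(\mathbb{R}^3\times H)$.
   Context: An equivalence relation $\sim$ on $\mathbb{R}^4$ is $\mathcal{G}$-invariant if $x\sim y$ implies $g(x)\sim g(y)$ for all $x,y$ and $g\in\mathcal{G}$. It is trivial if it is the total relation $\mathbb{R}^4\times\mathbb{R}^4$ or the identity relation (diagonal). *)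

From HB Require Import structures.
From mathcomp Require Import all_boot all_order all_algebra.
From mathcomp Require Import reals.
Set Implicit Arguments. Unset Strict Implicit. Unset Printing Implicit Defensive.
Import Order.TTheory GRing.Theory Num.Theory.
Local Open Scope ring_scope.

Section Galilei.
Variable R : realType.

Definition is_SO3 (S : 'M[R]_3) : Prop := S^T *m S = 1%:M /\ \det S = 1.

Definition galilei_map (S : 'M[R]_3) (w : 'cV[R]_3) (b : 'cV[R]_4)
  : 'cV[R]_4 -> 'cV[R]_4 :=
  fun x => (block_mx S w 0 1 : 'M[R]_4) *m x + b.

Definition in_Galilei (g : 'cV[R]_4 -> 'cV[R]_4) : Prop :=
  exists S w b, is_SO3 S /\ g = galilei_map S w b.

Definition is_equivalence (rel : 'cV[R]_4 -> 'cV[R]_4 -> Prop) : Prop :=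
  (forall x, rel x x) /\ (forall x y, rel x y -> rel y x) /\
  (forall x y z, rel x y -> rel y z -> rel x z).

Definition G_invariant (rel : 'cV[R]_4 -> 'cV[R]_4 -> Prop) : Prop :=
  forall g, in_Galilei g -> forall x y, rel x y -> rel (g x) (g y).

Definition trivial_rel (rel : 'cV[R]_4 -> 'cV[R]_4 -> Prop) : Prop :=
  (forall x y, rel x y) \/ (forall x y, rel x y <-> x = y).

Definition additive_subgroup (H : R -> Prop) : Prop :=
  H 0 /\ (forall a b, H a -> H b -> H (a - b)).

Definition proper_subset (H : R -> Prop) : Prop := exists r, ~ H r.

(* x ~_H y  iff  y \in x + (R^3 x H), i.e. the time coordinate of y - x lies in H *)
Definition sim_H (H : R -> Prop) (x y : 'cV[R]_4) : Prop :=
  H ((y - x) ord_max 0).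

End Galilei.

(* Translation invariance turns a G-invariant equivalence into x ~ y <-> y - x \in K,
   where the class K of 0 is an additive subgroup of R^4 stable under the linear
   Galilei maps. If K <> {0} it contains every purely spatial vector: from a vector
   with time component t <> 0 the boosts reach every vector with time component t, and
   differences of these are spatial; a nonzero spatial vector plus its half-turn about a
   coordinate axis is a nonzero multiple a e_k of a basis vector, which the rotations
   move onto e_0, and the rotations of a e_0 by +-theta add up to 2 a cos(theta) e_0, so
   the multiples of e_0 in K contain an interval around 0, hence all of them. Thus
   K = R^3 x H with H = {r | (0, r) ~ 0}; H is proper because ~ is not total. *)

From HB Require Import structures.
From mathcomp Require Import all_boot all_order all_algebra.
From mathcomp Require Import boolp reals.
From mathcomp Require Import ring lra.
Set Implicit Arguments. Unset Strict Implicit. Unset Printing Implicit Defensive.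
Import Order.TTheory GRing.Theory Num.Theory.
Local Open Scope ring_scope.

Section Subgroup.
Variables (V : zmodType) (Q : V -> Prop).
Hypotheses (Q0 : Q 0) (QB : forall u v, Q u -> Q v -> Q (u - v)).

Lemma subgroupN u : Q u -> Q (- u).
Proof. by move=> Qu; rewrite -sub0r; apply: QB. Qed.

Lemma subgroupD u v : Q u -> Q v -> Q (u + v).
Proof. by move=> Qu Qv; rewrite -[v]opprK; apply/QB/subgroupN. Qed.

Lemma subgroupMn u n : Q u -> Q (u *+ n).
Proof.
by move=> Qu; elim: n => [|n IH]; [rewrite mulr0n | rewrite mulrS; exact: subgroupD].
Qed.

End Subgroup.

Section RealSubgroup.
Variable R : realType.

(* Every real is an integer multiple of a real of modulus at most [e]. *)
Lemma subgroup_full_of_interval (H : R -> Prop) (e : R) :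
  additive_subgroup H -> 0 < e -> (forall y, `|y| <= e -> H y) -> forall x, H x.
Proof.
move=> [H0 HB] e0 He x.
pose n := (Num.bound (`|x| / e)).+1.
have n0 : 0 < n%:R :> R by rewrite ltr0n.
have -> : x = (x / n%:R) *+ n by rewrite -mulr_natr mulfVK // gt_eqF.
apply: (subgroupMn H0 HB); apply: He.
rewrite normrM normfV normr_nat ler_pdivrMr // mulrC -ler_pdivrMr //.
apply/ltW/(lt_le_trans (archi_boundP _)); last by rewrite ler_nat.
by rewrite divr_ge0 // ltW.
Qed.
End RealSubgroup.

Section ThreeSpace.
Variable R : realType.

(* Entries are indexed by [nat] so that concrete 3x3 computations reduce by case
   analysis on the indices; values at indices >= 3 are irrelevant. *)
Definition mx3 (f : nat -> nat -> R) : 'M[R]_3 := \matrix_(i, j) f i j.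
Definition col3 (g : nat -> R) : 'cV[R]_3 := \col_i g i.
Definition coord3 (u : 'cV[R]_3) (k : nat) : R := u (inord k) 0.

Lemma det_mx3 f : \det (mx3 f) =
  f 0 0 * (f 1 1 * f 2 2 - f 1 2 * f 2 1)
  - f 0 1 * (f 1 0 * f 2 2 - f 1 2 * f 2 0)
  + f 0 2 * (f 1 0 * f 2 1 - f 1 1 * f 2 0).
Proof.
rewrite (expand_det_row _ ord0) !big_ord_recl big_ord0 /cofactor.
rewrite !(expand_det_row _ ord0) !big_ord_recl !big_ord0 /cofactor.
by rewrite !det_mx11 !mxE /bump /=; ring.
Qed.

Lemma eq_col3 g h : (forall i, (i < 3)%N -> g i = h i) -> col3 g = col3 h.
Proof. by move=> gh; apply/matrixP => i j; rewrite !mxE gh. Qed.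

Lemma mul_mx3_col3 f g : mx3 f *m col3 g =
  col3 (fun i => f i 0%N * g 0%N + f i 1%N * g 1%N + f i 2%N * g 2%N).
Proof.
apply/matrixP => i j; rewrite !mxE !big_ord_recl big_ord0 !mxE /bump /=.
by rewrite addr0 addrA.
Qed.

Lemma add_col3 g h : col3 g + col3 h = col3 (fun i => g i + h i).
Proof. by apply/matrixP => i j; rewrite !mxE. Qed.

Lemma col3_coord u : u = col3 (coord3 u).
Proof. by apply/matrixP => i j; rewrite mxE ord1 /coord3 inord_val. Qed.

Lemma is_SO3_mx3 f :
  (forall i j, (i < 3)%N -> (j < 3)%N ->
     f 0%N i * f 0%N j + f 1%N i * f 1%N j + f 2%N i * f 2%N j = (i == j)%:R) ->
  \det (mx3 f) = 1 -> is_SO3 (mx3 f).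
Proof.
move=> orth det1; split=> //; apply/matrixP => i j.
by rewrite !mxE !big_ord_recl big_ord0 !mxE /bump /= addr0 addrA orth.
Qed.

Definition axis (k : nat) (x : R) : 'cV[R]_3 := col3 (fun i => if i == k then x else 0).

Definition rot01 (c s : R) : 'M[R]_3 := mx3 (fun i j => match i, j with
  | 0%N, 0%N => c | 0%N, 1%N => - s | 1%N, 0%N => s | 1%N, 1%N => c | 2%N, 2%N => 1
  | _, _ => 0 end).

Definition half_turn (k : nat) : 'M[R]_3 :=
  mx3 (fun i j => if i == j then (if i == k then 1 else -1) else 0).

Definition cyc3 : 'M[R]_3 := mx3 (fun i j => match i, j with
  | 1%N, 0%N | 2%N, 1%N | 0%N, 2%N => 1 | _, _ => 0 end).

Lemma is_SO3_rot01 c s : c ^+ 2 + s ^+ 2 = 1 -> is_SO3 (rot01 c s).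
Proof.
move=> cs; apply: is_SO3_mx3; last by rewrite det_mx3 /=; lra.
by case=> [|[|[|i]]] [|[|[|j]]] //= _ _; lra.
Qed.

Lemma is_SO3_half_turn k : (k < 3)%N -> is_SO3 (half_turn k).
Proof.
move=> k3; apply: is_SO3_mx3; last by case: k k3 => [|[|[|]]] //= _; rewrite det_mx3 /=; ring.
by case: k k3 => [|[|[|]]] // _ [|[|[|i]]] [|[|[|j]]] //= _ _; ring.
Qed.

Lemma is_SO3_cyc3 : is_SO3 cyc3.
Proof.
apply: is_SO3_mx3; last by rewrite det_mx3 /=; ring.
by case=> [|[|[|i]]] [|[|[|j]]] //= _ _; ring.
Qed.

Lemma rot01_axis0 c s x :
  rot01 c s *m axis 0 x + rot01 c (- s) *m axis 0 x = axis 0 (2 * c * x).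
Proof.
rewrite !mul_mx3_col3 add_col3; apply: eq_col3.
by case=> [|[|[|i]]] //= _; ring.
Qed.

Lemma add_half_turn k u : (k < 3)%N -> u + half_turn k *m u = axis k (2 * coord3 u k).
Proof.
rewrite {1 2}[u]col3_coord mul_mx3_col3 add_col3 => k3; apply: eq_col3.
by case: k k3 => [|[|[|]]] // _ [|[|[|i]]] //= _; ring.
Qed.

Lemma cyc3_axis k x : (k < 3)%N -> cyc3 *m axis k x = axis (k.+1 %% 3) x.
Proof.
rewrite mul_mx3_col3 => k3; apply: eq_col3.
by case: k k3 => [|[|[|]]] // _ [|[|[|i]]] //= _; ring.
Qed.

Lemma axis0 k : axis k 0 = 0.
Proof. by apply/matrixP => i j; rewrite !mxE; case: ifP. Qed.

Lemma axisB k x y : axis k (x - y) = axis k x - axis k y.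
Proof. by apply/matrixP => i j; rewrite !mxE; case: ifP; rewrite ?subr0. Qed.

Lemma col3_axes u : u = axis 0 (coord3 u 0) + axis 1 (coord3 u 1) + axis 2 (coord3 u 2).
Proof.
rewrite !add_col3 {1}[u]col3_coord; apply: eq_col3.
by case=> [|[|[|i]]] //= _; ring.
Qed.

End ThreeSpace.

Section RotationInvariantSubgroup.
Variables (R : realType) (P : 'cV[R]_3 -> Prop).
Hypotheses (P0 : P 0) (PB : forall u v, P u -> P v -> P (u - v)).
Hypothesis P_SO3 : forall S u, is_SO3 S -> P u -> P (S *m u).

Lemma axis_subgroup k : additive_subgroup (fun x => P (axis k x)).
Proof. by split=> [|x y Px Py]; rewrite ?axis0 ?axisB //; apply: PB. Qed.

Lemma P_axis_move k l x : (k < 3)%N -> (l < 3)%N -> P (axis k x) -> P (axis l x).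
Proof.
have next j : P (axis j x) -> (j < 3)%N -> P (axis (j.+1 %% 3) x).
  by move=> Pj j3; rewrite -cyc3_axis //; apply: P_SO3 (is_SO3_cyc3 R) Pj.
case: k => [|[|[|]]] // _; case: l => [|[|[|]]] // _ Pk;
  do ?[exact: Pk | have {}Pk := next _ Pk isT].
Qed.

Lemma P_axis0_double c a : `|c| <= 1 -> P (axis 0 a) -> P (axis 0 (2 * c * a)).
Proof.
move=> c1 Pa; have c2 : c ^+ 2 <= 1.
  by rewrite -real_normK ?num_real //; apply: exprn_ile1.
set s := Num.sqrt (1 - c ^+ 2).
have cs : c ^+ 2 + s ^+ 2 = 1 by rewrite sqr_sqrtr ?subr_ge0 // addrC subrK.
have csN : c ^+ 2 + (- s) ^+ 2 = 1 by rewrite sqrrN.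
rewrite -(rot01_axis0 c s); apply: (subgroupD P0 PB).
  exact: P_SO3 (is_SO3_rot01 cs) Pa.
exact: P_SO3 (is_SO3_rot01 csN) Pa.
Qed.

Lemma P_axis0_full a : a != 0 -> P (axis 0 a) -> forall x, P (axis 0 x).
Proof.
move=> a0 Pa; apply: (subgroup_full_of_interval (axis_subgroup 0) (e := 2 * `|a|)).
  by rewrite mulr_gt0 ?normr_gt0.
move=> y ya; have -> : y = 2 * (y / (2 * a)) * a by field.
apply: P_axis0_double Pa.
by rewrite normrM normfV ler_pdivrMr ?normr_gt0 ?mulf_neq0 ?pnatr_eq0 // mul1r normrM normr_nat.
Qed.

Lemma P_axis0_of_nonzero s : P s -> s != 0 -> exists2 a, a != 0 & P (axis 0 a).
Proof.
move=> Ps s0.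
have [k k3 sk] : exists2 k, (k < 3)%N & coord3 s k != 0.
  case: (eqVneq (coord3 s 0) 0) => s_0; last by exists 0%N.
  case: (eqVneq (coord3 s 1) 0) => s_1; last by exists 1%N.
  case: (eqVneq (coord3 s 2) 0) => s_2; last by exists 2%N.
  by move: s0; rewrite [s]col3_axes s_0 s_1 s_2 !axis0 !addr0 eqxx.
exists (2 * coord3 s k); first by rewrite mulf_neq0 ?pnatr_eq0.
apply: (P_axis_move k3) => //; rewrite -add_half_turn //.
by apply: (subgroupD P0 PB) => //; apply: P_SO3 (is_SO3_half_turn R k3) Ps.
Qed.

Lemma rotation_invariant_subgroup_full s : P s -> s != 0 -> forall u, P u.
Proof.
move=> Ps s0 u; have [a a0 Pa] := P_axis0_of_nonzero Ps s0.
have Paxis k x : (k < 3)%N -> P (axis k x).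
  by move=> k3; apply: (P_axis_move (k := 0%N)) => //; exact: P_axis0_full a0 Pa x.
rewrite (col3_axes u); apply: (subgroupD P0 PB); first apply: (subgroupD P0 PB).
all: exact: Paxis.
Qed.

End RotationInvariantSubgroup.

Section SpaceTime.
Variable R : realType.

Definition time (x : 'cV[R]_4) : R := x ord_max 0.
Definition space (x : 'cV[R]_4) : 'cV[R]_3 := usubmx (x : 'cV_(3 + 1)).
Definition event (s : 'cV[R]_3) (t : R) : 'cV[R]_4 := col_mx s t%:M.

Lemma eventE x : event (space x) (time x) = x.
Proof.
rewrite /event; have -> : (time x)%:M = dsubmx (x : 'cV_(3 + 1)).
  by rewrite [RHS]mx11_scalar mxE; congr (x _ _)%:M; apply: val_inj.
exact: (vsubmxK (x : 'cV_(3 + 1))).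
Qed.

Lemma time_event s t : time (event s t) = t.
Proof.
rewrite /time (_ : ord_max = rshift 3 (0 : 'I_1) :> 'I_4); last exact: val_inj.
by rewrite (col_mxEd s t%:M) mxE mulr1n.
Qed.

Lemma timeD x y : time (x + y) = time x + time y.
Proof. by rewrite /time mxE. Qed.

Lemma timeB x y : time (x - y) = time x - time y.
Proof. by rewrite /time !mxE. Qed.

Lemma event0 : event 0 0 = 0.
Proof. by rewrite /event raddf0 col_mx0. Qed.

Lemma eventB s t s' t' : event (s - s') (t - t') = event s t - event s' t'.
Proof.
have := add_col_mx s t%:M (- s') (- t'%:M); rewrite -opp_col_mx => sum_col.
by rewrite /event raddfB; exact/esym/sum_col.
Qed.

Lemma event_spaceB s s' : event (s - s') 0 = event s 0 - event s' 0.
Proof. by rewrite -eventB subr0. Qed.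

Lemma event_timeB t t' : event 0 (t - t') = event 0 t - event 0 t'.
Proof. by rewrite -eventB subr0. Qed.

Lemma galilei_map_event S w b s t :
  galilei_map S w b (event s t) = event (S *m s + t *: w) t + b.
Proof.
have := mul_block_col S w 0 1 s t%:M.
by rewrite mul0mx mul1mx add0r mul_mx_scalar => sum_block; rewrite /galilei_map sum_block.
Qed.

Lemma time_galilei_map S w b x : time (galilei_map S w b x) = time x + time b.
Proof. by rewrite -{1}(eventE x) galilei_map_event timeD !time_event. Qed.

Lemma is_SO3_1 : is_SO3 (1 : 'M[R]_3).
Proof. by split; rewrite ?trmx1 ?mul1mx ?det1. Qed.

Lemma galilei_map_translation (b x : 'cV[R]_4) : galilei_map 1 0 b x = x + b.
Proof. by rewrite -{1}(eventE x) galilei_map_event mul1mx scaler0 addr0 eventE. Qed.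

End SpaceTime.

Definition time_subgroup (R : realType) (rel : 'cV[R]_4 -> 'cV[R]_4 -> Prop) (r : R) :=
  rel 0 (event 0 r).

Section InvariantRelation.
Variables (R : realType) (rel : 'cV[R]_4 -> 'cV[R]_4 -> Prop).
Hypotheses (rel_equiv : is_equivalence rel) (rel_inv : G_invariant rel).

Lemma rel_translate x y b : rel x y -> rel (x + b) (y + b).
Proof.
rewrite -!galilei_map_translation; apply: rel_inv.
by exists 1, 0, b; split=> //; exact: is_SO3_1.
Qed.

Lemma relE x y : rel x y <-> rel 0 (y - x).
Proof.
split=> [/(rel_translate (- x)) | /(rel_translate x)]; first by rewrite subrr.
by rewrite add0r subrK.
Qed.

Lemma rel00 : rel 0 0.
Proof. by case: rel_equiv. Qed.

Lemma rel0B u v : rel 0 u -> rel 0 v -> rel 0 (u - v).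
Proof.
case: rel_equiv => _ [rel_sym rel_trans] ru rv.
apply: rel_trans ru _; apply/rel_sym/relE.
by rewrite opprB addrC subrK.
Qed.

Lemma rel0_linear S w v : is_SO3 S -> rel 0 v -> rel 0 (galilei_map S w 0 v).
Proof.
move=> SO3S rv; have gG : in_Galilei (galilei_map S w 0) by exists S, w, 0.
by have := rel_inv gG rv; rewrite {1}/galilei_map mulmx0 addr0.
Qed.

Lemma rel0_space v : rel 0 v -> v != 0 -> forall s, rel 0 (event s 0).
Proof.
move=> rv v0; have [t0 | t_neq0] := eqVneq (time v) 0.
  pose P u := rel 0 (event u 0).
  apply: (@rotation_invariant_subgroup_full _ P _ _ _ (space v)).
  - by rewrite /P event0; exact: rel00.
  - by move=> u u' Pu Pu'; rewrite /P event_spaceB; apply: rel0B.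
  - move=> S u SO3S /(rel0_linear 0 SO3S).
    by rewrite galilei_map_event scale0r !addr0.
  - by rewrite /P -t0 eventE.
  - by apply: contraNneq v0 => s0; rewrite -(eventE v) s0 t0 event0.
rewrite -(eventE v) in rv.
have rel_t u : rel 0 (event u (time v)).
  have := rel0_linear ((time v)^-1 *: (u - space v)) (is_SO3_1 R) rv.
  by rewrite galilei_map_event mul1mx scalerA divff // scale1r addr0 addrC subrK.
by move=> u; have := rel0B (rel_t u) (rel_t 0); rewrite -eventB subr0 subrr.
Qed.

Lemma rel0_time x : (forall s, rel 0 (event s 0)) -> rel 0 x <-> rel 0 (event 0 (time x)).
Proof.
move=> rel_s; have -> : event 0 (time x) = x - event (space x) 0.
  by rewrite -{2}(eventE x) -eventB subrr subr0.
split=> [rx | r_diff]; first exact: rel0B.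
by have := subgroupD rel00 rel0B r_diff (rel_s (space x)); rewrite subrK.
Qed.

Lemma time_subgroup_additive : additive_subgroup (time_subgroup rel).
Proof.
split=> [|a b ra rb]; first by rewrite /time_subgroup event0; exact: rel00.
by rewrite /time_subgroup event_timeB; apply: rel0B.
Qed.

Lemma rel_sim_time_subgroup v : rel 0 v -> v != 0 ->
  forall x y, rel x y <-> sim_H (time_subgroup rel) x y.
Proof.
move=> rv v0 x y; apply: (iff_trans (relE x y)); rewrite rel0_time //.
exact: rel0_space rv v0.
Qed.

End InvariantRelation.

Section SubgroupRelation.
Variables (R : realType) (H : R -> Prop).

Lemma sim_HE x y : sim_H H x y = H (time y - time x).
Proof. by rewrite -timeB. Qed.

Lemma sim_H_equivalence : additive_subgroup H -> is_equivalence (sim_H H).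
Proof.
move=> [H0 HB]; split; [|split] => [x | x y | x y z]; rewrite !sim_HE.
- by rewrite subrr.
- by move/(subgroupN H0 HB); rewrite opprB.
- by move=> Hxy Hyz; rewrite -(subrKA (time y)); apply: subgroupD.
Qed.

Lemma sim_H_invariant : G_invariant (sim_H H).
Proof.
move=> g [S [w [b [_ ->]]]] x y.
by rewrite !sim_HE !time_galilei_map opprD addrACA subrr addr0.
Qed.

Lemma sim_H_nontrivial : additive_subgroup H -> proper_subset H -> ~ trivial_rel (sim_H H).
Proof.
move=> [H0 _] [r Hr] [total | ident].
  by apply: Hr; have := total 0 (event 0 r); rewrite sim_HE time_event /time mxE subr0.
pose e0 : 'cV[R]_4 := delta_mx 0 0.
have /ident e0_eq0 : sim_H H 0 e0 by rewrite sim_HE /time !mxE subrr.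
by move/matrixP/(_ 0 0): e0_eq0; rewrite !mxE eqxx => /eqP; rewrite eq_sym oner_eq0.
Qed.

End SubgroupRelation.

Theorem theorem3p6 (R : realType) (rel : 'cV[R]_4 -> 'cV[R]_4 -> Prop) :
  (is_equivalence rel /\ G_invariant rel /\ ~ trivial_rel rel) <->
  (exists H : R -> Prop, additive_subgroup H /\ proper_subset H /\
     forall x y, rel x y <-> sim_H H x y).
Proof.
split=> [[rel_equiv [rel_inv rel_nontriv]] | [H [subH [propH relH]]]].
  have [v rv v0] : exists2 v, rel 0 v & v != 0.
    apply: contra_notP rel_nontriv => no_v; right=> x y.
    split=> [/(relE rel_inv) rxy | ->]; last by case: rel_equiv.
    by apply: contra_notP no_v => xy; exists (y - x); rewrite // subr_eq0 eq_sym; apply/eqP.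
  have rel_sim := rel_sim_time_subgroup rel_equiv rel_inv rv v0.
  exists (time_subgroup rel); split; [exact: time_subgroup_additive | split=> //].
  rewrite /proper_subset; apply: contra_notP rel_nontriv => no_r; left=> x y.
  by apply/rel_sim; rewrite sim_HE; apply: contrapT => nH; apply: no_r; exists (time y - time x).
have -> : rel = sim_H H by apply/funext=> x; apply/funext=> y; apply/propext/relH.
split; first exact: sim_H_equivalence.
by split; [exact: sim_H_invariant | exact: sim_H_nontrivial].
Qed.
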